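(* There exists an absolute constant $c\in(0,1]$ such that for every sufficiently large positive integer $n$ there exist a quartic form $q(x_1,\dots,x_n)=\sum_{\alpha\in\{0,1\}^n,\,|\alpha|=4}d_\alpha x^\alpha$ with $|q(x)|\le1$ for all $x\in\{-1,1\}^n$, and pairwise commuting contractions $A_1,\dots,A_n\in L(\mathbb{R}^{2n+2})$, such that $$\Big\|\sum_{i,j,k,\ell=1}^n(T_q)_{i,j,k,\ell}A_iA_jA_kA_\ell\Big\|\ge c\sqrt n.$$
   Context: For a form $q(x)=\sum_{|\alpha|=4}d_\alpha x^\alpha$, $T_q\in\mathbb{R}^{n\times n\times n\times n}$ is the symmetric tensor $(T_q)_{i,j,k,\ell}=d_{e_i+e_j+e_k+e_\ell}/\tau(i,j,k,\ell)$, where $\tau$ is the number of distinct permutations of $(i,j,k,\ell)$. A contraction is a linear map of operator norm at most $1$; $\|\cdot\|$ denotes the operator norm. *)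

From HB Require Import structures.
From mathcomp Require Import all_boot all_order all_algebra.
From mathcomp Require Import classical_sets reals Rstruct.
Notation R := Rdefinitions.R.
Set Implicit Arguments. Unset Strict Implicit. Unset Printing Implicit Defensive.
Import Order.TTheory GRing.Theory Num.Theory.
Local Open Scope ring_scope.

Definition norm2 (m : nat) (x : 'cV[R]_m) : R :=
  Num.sqrt (\sum_(i < m) x i 0 ^+ 2).

Definition opnorm (m : nat) (M : 'M[R]_m) : R :=
  sup (fun r : R => exists x : 'cV[R]_m, norm2 x <= 1 /\ r = norm2 (M *m x)).

(* A multilinear quartic form q(x) = sum_{alpha in {0,1}^n, |alpha| = 4} d_alpha x^alpha;
   the 0/1 multi-index alpha is identified with its support S (a 4-subset of 'I_n). *)
Definition quartic_eval (n : nat) (d : {set 'I_n} -> R) (x : 'I_n -> R) : R :=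
  \sum_(S : {set 'I_n} | #|S| == 4%N) d S * \prod_(i in S) x i.

Definition midx (n : nat) (i j k l : 'I_n) (m : 'I_n) : nat :=
  ((i == m) + (j == m) + (k == m) + (l == m))%N.

(* coefficient d_alpha of q at an arbitrary multi-index alpha (0 if alpha is not a
   0/1 multi-index, since q has no such monomial) *)
Definition coef_at (n : nat) (d : {set 'I_n} -> R) (alpha : 'I_n -> nat) : R :=
  if [forall m, (alpha m <= 1)%N] then d [set m | alpha m == 1%N] else 0.

(* tau(i,j,k,l) = number of distinct permutations of (i,j,k,l) *)
Definition tau (n : nat) (i j k l : 'I_n) : nat :=
  (4`! %/ \prod_(m : 'I_n) (midx i j k l m)`!)%N.

Definition Tq (n : nat) (d : {set 'I_n} -> R) (i j k l : 'I_n) : R :=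
  coef_at d (midx i j k l) / (tau i j k l)%:R.

(* Let m = s^2.  Counting sign patterns against an exponential moment (a Chernoff bound
   plus a union bound) yields signs e_jk, j, k < m, such that the cubic form
   C(x, y, z) = sum_jk e_jk x_(j+k) y_j z_k is at most W = s(5m + 2) = O(m^(3/2)) on
   the cube, although it has m^2 coefficients.  Then q = x_0 C(x_X, x_Y, x_Z) / W, in
   n >= 4m + 1 variables, is bounded by 1 on {-1,1}^n.

   The contractions come from Varopoulos' construction: if t is a symmetric trilinear
   form on R^n whose slices t(i, ., .) have absolute row and column sums at most 1, the
   matrices N_i on R + R^n + R^n + R mapping e |-> f_i, f_b |-> sum_c t(i,b,c) g_c,
   g_c |-> [c = i] h and h |-> 0 commute (by symmetry of t), are contractions (by
   Schur's test), and N_i N_j N_k e = t(i,j,k) h.  We take A_0 = 1, A_i = N_i, and t the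
   symmetrisation of e_jk on the positions (j+k, j, k): any two of these positions
   determine (j, k), which bounds the slices.  The (h, e) entry of
   sum T_q(i,j,k,l) A_i A_j A_k A_l is then 4 sum T_q(0,j,k,l) t(j,k,l) = m^2 / (6W),
   of order s/30, while sqrt n <= 6s. *)

From HB Require Import structures.
From mathcomp Require Import all_boot all_order all_algebra.
From mathcomp Require Import classical_sets reals Rstruct.
From mathcomp Require Import zify ring lra.
From Stdlib Require PeanoNat.
Import Order.TTheory GRing.Theory Num.Theory.
Set Implicit Arguments.
Unset Strict Implicit.
Unset Printing Implicit Defensive.
Local Open Scope ring_scope.

(** * Sign patterns with small cubic sums *)

Lemma bernoulli {K : realDomainType} (x : K) (k : nat) :
  0 <= x -> 1 + k%:R * x <= (1 + x) ^+ k.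
Proof.
move=> x_ge0; elim: k => [|k IHk]; first by rewrite mul0r addr0 expr0.
rewrite exprS -natr1.
apply: le_trans (ler_wpM2l _ IHk); last lra.
have : 0 <= k%:R * x * x by rewrite !mulr_ge0.
nra.
Qed.

Lemma bernoulli_reverse {K : realDomainType} (x : K) (k : nat) :
  0 <= x -> (1 + x) ^+ k * (1 - k%:R * x) <= 1.
Proof.
move=> x_ge0; elim: k => [|k IHk]; first by rewrite mul0r subr0 expr0 mulr1.
have pow_ge0 : 0 <= (1 + x) ^+ k by apply: exprn_ge0; lra.
have : 0 <= (1 + x) ^+ k * ((k%:R + 1) * x * x) by rewrite !mulr_ge0 // addr_ge0.
rewrite exprSr -natr1; nra.
Qed.

Section Agreement.
Variable P : finType.

Definition agree (e s : P -> bool) : nat := \sum_p (e p == s p).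

Lemma sum_pow_agree (K : comNzRingType) (s : P -> bool) (b : K) :
  \sum_(e : {ffun P -> bool}) b ^+ agree e s = (1 + b) ^+ #|P|.
Proof.
rewrite -prodr_const.
have -> : \prod_(p in P) (1 + b) = \prod_p \sum_(c : bool) b ^+ (c == s p).
  by apply: eq_bigr => p _; rewrite big_bool; case: (s p); rewrite /= addrC.
by rewrite bigA_distr_bigA; apply: eq_bigr => e _; rewrite prodrXr.
Qed.

(* Markov's inequality for the exponential moment [c ^+ (2 * agree e s)]. *)
Lemma agree_tail (s : P -> bool) (c : R) (k : nat) : 1 <= c ->
  \sum_(e : {ffun P -> bool}) (k <= 2 * agree e s)%N%:R * c ^+ k
    <= (1 + c ^+ 2) ^+ #|P|.
Proof.
move=> c_ge1; rewrite -(sum_pow_agree s); apply: ler_sum => e _.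
case: leqP => [k_le|_]; last by rewrite mul0r exprn_ge0 // exprn_ge0 //; lra.
by rewrite mul1r -exprM ler_weXn2l.
Qed.

Lemma exists_low_agreement (T : finType) (sigma : T -> P -> bool) (c : R) (k : nat) :
  1 <= c -> #|T|%:R * (1 + c ^+ 2) ^+ #|P| < 2 ^+ #|P| * c ^+ k ->
  exists e : {ffun P -> bool}, forall t, (2 * agree e (sigma t) < k)%N.
Proof.
move=> c_ge1 budget.
suff /existsP[e /forallP low] :
    [exists e : {ffun P -> bool}, [forall t, 2 * agree e (sigma t) < k]%N].
  by exists e.
apply: contraLR budget; rewrite negb_exists -leNgt => /forallP high.
have -> : 2 ^+ #|P| * c ^+ k = \sum_(e : {ffun P -> bool}) c ^+ k.
  by rewrite sumr_const card_ffun card_bool -[RHS]mulr_natl natrX.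
rewrite mulr_natl -sumr_const.
apply: (@le_trans _ _
  (\sum_(e : {ffun P -> bool}) \sum_(t : T) (k <= 2 * agree e (sigma t))%N%:R * c ^+ k)).
  apply: ler_sum => e _; have /forallPn[t] := high e; rewrite -leqNgt => t_high.
  rewrite (bigD1 t) //= t_high mul1r lerDl.
  by apply: sumr_ge0 => ? _; rewrite mulr_ge0 ?exprn_ge0 //; lra.
by rewrite exchange_big; apply: ler_sum => t _; apply: agree_tail.
Qed.

Lemma agree_compl (e s s' : P -> bool) :
  (forall p, s' p = ~~ s p) -> (agree e s + agree e s')%N = #|P|.
Proof.
move=> s'E; rewrite -big_split -sum1_card; apply: eq_bigr => p _.
by rewrite s'E; case: (e p); case: (s p).
Qed.

End Agreement.

Definition bsign (b : bool) : R := if b then 1 else -1.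

Lemma bsignM a b : bsign a * bsign b = bsign (a == b).
Proof. by case: a; case: b; rewrite /bsign /= ?mulr1 ?mulrN1 ?opprK. Qed.

Lemma bsign_eq1 (x : R) : x = 1 \/ x = -1 -> x = bsign (x == 1).
Proof.
by case=> ->; rewrite /bsign ?eqxx // (_ : (-1 == 1 :> R) = false) //; apply: lt_eqF; lra.
Qed.

Lemma normr_bsign b : `|bsign b| = 1.
Proof. by case: b; rewrite /bsign ?normrN normr1. Qed.

Lemma sum_bsign_agree (P : finType) (e s : P -> bool) :
  \sum_p bsign (e p) * bsign (s p) = 2 * (agree e s)%:R - #|P|%:R.
Proof.
rewrite natr_sum mulr_sumr -sum1_card natr_sum -sumrB; apply: eq_bigr => p _.
by rewrite bsignM /bsign; case: (e p == s p) => /=; lra.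
Qed.

Definition sign_vector (I : Type) (x : I -> R) : Prop := forall i, x i = 1 \/ x i = -1.

Fact ord_add_subproof (m : nat) (j k : 'I_m) : (j + k < m + m)%N.
Proof. by rewrite -addSn leq_add // ltnW. Qed.

Definition ord_add (m : nat) (j k : 'I_m) : 'I_(m + m) := Ordinal (ord_add_subproof j k).

Definition cube_sum (m : nat) (e : 'I_m -> 'I_m -> bool) (x : 'I_(m + m) -> R) (y z : 'I_m -> R) :=
  \sum_j \sum_k bsign (e j k) * x (ord_add j k) * y j * z k.

Section SignPattern.
Variable s : nat.
Hypothesis s_gt0 : (0 < s)%N.
Local Notation m := (s * s)%N.
Local Notation c := (1 + s%:R^-1 : R).

Lemma chernoff_budget :
  2 ^+ (4 * m + 1) * (1 + c ^+ 2) ^+ (m * m) < 2 ^+ (m * m) * c ^+ (m * m + s * (5 * m + 2)).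
Proof.
set d : R := s%:R^-1; set x : R := d ^+ 2 / 2.
have d_ge0 : 0 <= d by rewrite invr_ge0.
have sd : s%:R * d = 1 by rewrite mulfV // pnatr_eq0 -lt0n.
have mx : m%:R * x = 1 / 2 by rewrite natrM /x mulrA -expr2 -exprMn sd expr1n.
have x_ge0 : 0 <= x by rewrite divr_ge0 ?exprn_ge0.
have c_ge0 : 0 <= 1 + d by lra.
have sq_le : 1 + (1 + d) ^+ 2 <= 2 * (1 + x) * (1 + d).
  by rewrite -subr_ge0 (_ : _ - _ = d ^+ 3) ?exprn_ge0 // /x; field.
have pow_x_le : (1 + x) ^+ m <= 2 by have := bernoulli_reverse m x_ge0; rewrite mx; lra.
have pow_c_ge : 2 <= (1 + d) ^+ s by have := bernoulli s d_ge0; rewrite sd; lra.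
have pos : 0 < 2 ^+ (m * m) * (1 + d) ^+ (m * m) :> R by rewrite mulr_gt0 ?exprn_gt0 //; lra.
apply: (@le_lt_trans _ _ (2 ^+ (m * m) * (1 + d) ^+ (m * m) * 2 ^+ (5 * m + 1))).
  apply: le_trans
    (_ : 2 ^+ (4 * m + 1) * (2 ^+ (m * m) * ((1 + x) ^+ m) ^+ m * (1 + d) ^+ (m * m)) <= _).
    rewrite ler_wpM2l ?exprn_ge0 // -exprM -!exprMn lerXn2r // nnegrE.
      by rewrite addr_ge0 ?exprn_ge0.
    by rewrite !mulr_ge0 //; lra.
  rewrite [X in _ <= X](_ : _ =
      2 ^+ (4 * m + 1) * (2 ^+ (m * m) * 2 ^+ m * (1 + d) ^+ (m * m))); last first.
    by rewrite (_ : 5 * m + 1 = 4 * m + 1 + m)%N ?exprD; [ring | lia].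
  rewrite ler_wpM2l ?exprn_ge0 // ler_wpM2r ?exprn_ge0 // ler_wpM2l ?exprn_ge0 //.
  by rewrite lerXn2r ?nnegrE ?exprn_ge0 //; lra.
rewrite [in X in _ < X]exprD mulrA ltr_pM2l // exprM.
apply: lt_le_trans (_ : 2 ^+ (5 * m + 2) <= _); first by rewrite ltr_eXn2l ?ltr1n //; lia.
by rewrite lerXn2r ?nnegrE ?exprn_ge0.
Qed.

Lemma exists_sign_pattern : exists e : 'I_m -> 'I_m -> bool,
  forall x y z, sign_vector x -> sign_vector y -> sign_vector z ->
  `|cube_sum e x y z| <= (s * (5 * m + 2))%:R.
Proof.
(* [t = (b, x, y, z)] codes sign vectors by booleans; the bit [b] accounts for both
   signs of the sum. *)
pose T : finType :=
  (bool * {ffun 'I_(m + m) -> bool} * {ffun 'I_m -> bool} * {ffun 'I_m -> bool})%type.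
pose sigma (t : T) (p : 'I_m * 'I_m) :=
  t.1.1.1 == (t.1.1.2 (ord_add p.1 p.2) == (t.1.2 p.1 == t.2 p.2)).
have card_P : #|{: 'I_m * 'I_m}| = (m * m)%N by rewrite card_prod card_ord.
have [||e low] := @exists_low_agreement _ _ sigma c (m * m + s * (5 * m + 2)).
- by rewrite lerDl invr_ge0.
- have -> : #|T| = (2 ^ (4 * m + 1))%N.
    rewrite /T !card_prod !card_ffun !card_bool !card_ord.
    by rewrite (_ : 4 * m + 1 = (m + m + m + m).+1)%N ?expnS ?expnD; [ring | lia].
  by rewrite card_P natrX; apply: chernoff_budget.
exists (fun j k => e (j, k)) => x y z x_pm y_pm z_pm.
pose t b : T := (b, [ffun i => x i == 1], [ffun j => y j == 1], [ffun k => z k == 1]).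
have -> : cube_sum (fun j k => e (j, k)) x y z = 2 * (agree e (sigma (t true)))%:R - (m * m)%:R.
  rewrite /cube_sum -card_P -sum_bsign_agree pair_bigA; apply: eq_bigr => -[j k] _.
  rewrite (bsign_eq1 (x_pm _)) (bsign_eq1 (y_pm j)) (bsign_eq1 (z_pm k)).
  by rewrite /sigma /= !ffunE -!mulrA !bsignM.
have : (agree e (sigma (t true)) + agree e (sigma (t false)))%N = (m * m)%N.
  rewrite -card_P; apply: agree_compl => p.
  by rewrite /sigma /=; case: ([ffun i => x i == 1] _ == _).
move: (low (t true)) (low (t false)); set a := agree e _; set a' := agree e _ => lo lo' sum_a.
have /andP[] : ((m * m <= 2 * a + s * (5 * m + 2)) && (2 * a <= m * m + s * (5 * m + 2)))%N by lia.
rewrite -!(ler_nat R) !natrD !natrM => ge le.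
by rewrite ler_norml; apply/andP; split; lra.
Qed.

End SignPattern.

(** * Schur's test and operator norms *)

Section SchurTest.
Variable K : realDomainType.

Lemma weighted_cauchy_schwarz (U : finType) (w v : U -> K) : (forall a, 0 <= w a) ->
  (\sum_a w a * v a) ^+ 2 <= (\sum_a w a) * (\sum_a w a * v a ^+ 2).
Proof.
move=> w_ge0; rewrite -(@ler_pM2l _ 2) //.
have -> : 2 * ((\sum_a w a) * (\sum_a w a * v a ^+ 2)) =
    \sum_a \sum_b (w a * (w b * v b ^+ 2) + w b * (w a * v a ^+ 2)).
  rewrite mulr2n mulrDl mul1r [in X in _ + X]mulrC !mulr_suml -big_split /=.
  apply: eq_bigr => a _; rewrite !mulr_sumr -big_split /=; apply: eq_bigr => b _; ring.
rewrite expr2 mulr_suml mulr_sumr; apply: ler_sum => a _; rewrite !mulr_sumr; apply: ler_sum => b _.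
rewrite -subr_ge0 (_ : _ - _ = w a * w b * (v a - v b) ^+ 2); last by ring.
by rewrite mulr_ge0 ?sqr_ge0 ?mulr_ge0.
Qed.

Lemma schur_test (U V : finType) (B : U -> V -> K) (u : U -> K) :
  (forall b, \sum_a `|B a b| <= 1) -> (forall a, \sum_b `|B a b| <= 1) ->
  \sum_b (\sum_a B a b * u a) ^+ 2 <= \sum_a u a ^+ 2.
Proof.
move=> col_le1 row_le1.
apply: (@le_trans _ _ (\sum_b \sum_a `|B a b| * u a ^+ 2)).
  apply: ler_sum => b _.
  apply: (@le_trans _ _ ((\sum_a `|B a b| * `|u a|) ^+ 2)).
    rewrite -[X in X <= _]ger0_norm ?sqr_ge0 // normrX lerXn2r ?nnegrE ?sumr_ge0 //.
      by move=> a _; rewrite mulr_ge0.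
    by apply: le_trans (ler_norm_sum _ _ _) _; apply: ler_sum => a _; rewrite normrM.
  apply: le_trans (weighted_cauchy_schwarz (fun a => `|u a|) (fun a => normr_ge0 (B a b))) _.
  have -> : \sum_a `|B a b| * `|u a| ^+ 2 = \sum_a `|B a b| * u a ^+ 2.
    by apply: eq_bigr => a _; rewrite real_normK ?num_real.
  by rewrite -[X in _ <= X]mul1r ler_wpM2r ?col_le1 ?sumr_ge0 // => a _; rewrite mulr_ge0 ?sqr_ge0.
rewrite exchange_big; apply: ler_sum => a _.
by rewrite -mulr_suml -[X in _ <= X]mul1r ler_wpM2r ?sqr_ge0.
Qed.

End SchurTest.

Section OperatorNorm.
Variable m : nat.
Implicit Types (M : 'M[R]_m) (x : 'cV[R]_m).

Lemma abs_coord_le_norm2 x q : `|x q 0| <= norm2 x.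
Proof.
rewrite /norm2 -sqrtr_sqr ler_sqrt ?sumr_ge0 // => [|i _]; last exact: sqr_ge0.
by rewrite (bigD1 q) //= lerDl sumr_ge0 // => i _; apply: sqr_ge0.
Qed.

Lemma norm2_delta q : norm2 (delta_mx q 0 : 'cV[R]_m) = 1.
Proof.
rewrite /norm2 (bigD1 q) //= big1 => [|i /negbTE iq]; last by rewrite mxE iq expr0n.
by rewrite mxE !eqxx expr1n addr0 sqrtr1.
Qed.

Lemma norm2_mulmx_le M x : norm2 x <= 1 ->
  norm2 (M *m x) <= Num.sqrt (\sum_p (\sum_q `|M p q|) ^+ 2).
Proof.
move=> x_le1; rewrite /norm2 ler_sqrt ?sumr_ge0 // => [|p _]; last exact: sqr_ge0.
apply: ler_sum => p _; rewrite mxE -[X in X <= _]ger0_norm ?sqr_ge0 // normrX.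
rewrite lerXn2r ?nnegrE ?sumr_ge0 //.
apply: le_trans (ler_norm_sum _ _ _) _; apply: ler_sum => q _.
rewrite normrM ler_piMr //; exact: le_trans (abs_coord_le_norm2 x q) x_le1.
Qed.

Lemma norm2_0 : norm2 (0 : 'cV[R]_m) = 0.
Proof. by rewrite /norm2 big1 ?sqrtr0 // => i _; rewrite mxE expr0n. Qed.

Let image_ball M r := exists x, norm2 x <= 1 /\ r = norm2 (M *m x).

Lemma opnorm_has_sup M : has_sup (image_ball M).
Proof.
split; first by exists (norm2 (M *m 0)), 0; rewrite norm2_0 ler01.
by exists (Num.sqrt (\sum_p (\sum_q `|M p q|) ^+ 2)) => r [x [x_le1 ->]]; apply: norm2_mulmx_le.
Qed.

Lemma opnorm_entry_le M p q : `|M p q| <= opnorm M.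
Proof.
apply: le_trans (sup_upper_bound (opnorm_has_sup M) _); last first.
  by exists (delta_mx q 0); rewrite norm2_delta.
by rewrite -colE (_ : M p q = col q M p 0) ?abs_coord_le_norm2 // mxE.
Qed.

Lemma opnorm_le1 M : (forall x, norm2 (M *m x) <= norm2 x) -> opnorm M <= 1.
Proof.
move=> M_le; apply: ge_sup; first by exists (norm2 (M *m 0)), 0; rewrite norm2_0 ler01.
by move=> r [x [x_le1 ->]]; apply: le_trans (M_le x) x_le1.
Qed.

End OperatorNorm.

(** * Varopoulos' commuting contractions *)

Section Blocks.
Variable n : nat.
Local Notation D := (2 * n + 2)%N.

Fact pE_subproof : (0 < D)%N. Proof. lia. Qed.
Fact pV_subproof (b : 'I_n) : (1 + b < D)%N. Proof. by have := ltn_ord b; lia. Qed.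
Fact pW_subproof (c : 'I_n) : (1 + n + c < D)%N. Proof. by have := ltn_ord c; lia. Qed.
Fact pF_subproof : (1 + n + n < D)%N. Proof. lia. Qed.

Definition pE : 'I_D := Ordinal pE_subproof.
Definition pV b : 'I_D := Ordinal (pV_subproof b).
Definition pW c : 'I_D := Ordinal (pW_subproof c).
Definition pF : 'I_D := Ordinal pF_subproof.

Ltac block_neq := intros; apply: negbTE; apply/eqP => /(congr1 val) /=; lia.

Lemma pEV b : (pE == pV b) = false. Proof. block_neq. Qed.
Lemma pEW c : (pE == pW c) = false. Proof. block_neq. Qed.
Lemma pEF : (pE == pF) = false. Proof. block_neq. Qed.
Lemma pVW b c : (pV b == pW c) = false. Proof. by have := ltn_ord b; block_neq. Qed.
Lemma pVF b : (pV b == pF) = false. Proof. by have := ltn_ord b; block_neq. Qed.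
Lemma pWV c b : (pW c == pV b) = false. Proof. by have := ltn_ord b; block_neq. Qed.
Lemma pWF c : (pW c == pF) = false. Proof. by have := ltn_ord c; block_neq. Qed.
Lemma pFV b : (pF == pV b) = false. Proof. by have := ltn_ord b; block_neq. Qed.
Lemma pFW c : (pF == pW c) = false. Proof. by have := ltn_ord c; block_neq. Qed.

Lemma pVV b b' : (pV b == pV b') = (b == b').
Proof. by apply/eqP/eqP => [/(congr1 val) /= /addnI /val_inj|->]. Qed.

Lemma pWW c c' : (pW c == pW c') = (c == c').
Proof. by apply/eqP/eqP => [/(congr1 val) /= /addnI /val_inj|->]. Qed.

Lemma sum_blocks (F : 'I_D -> R) :
  \sum_q F q = F pE + \sum_b F (pV b) + \sum_c F (pW c) + F pF.
Proof.
have eqD : ((1 + n) + (n + 1) = D)%N by lia.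
rewrite (reindex (cast_ord eqD)); last first.
  by exists (cast_ord (esym eqD)) => q _; rewrite ?cast_ordK ?cast_ordKV.
rewrite big_split_ord /= !big_split_ord /= !big_ord1 addrA.
congr (F _ + _ + _ + F _); try apply: eq_bigr => ? _; try congr (F _).
all: by apply/val_inj => /=; rewrite ?addn0.
Qed.

End Blocks.

Arguments pE {n}.
Arguments pF {n}.

Section SymmetricTensor.
Variables (n : nat) (d : {set 'I_n} -> R).

Lemma Tq_midx i j k l i' j' k' l' :
  midx i j k l =1 midx i' j' k' l' -> Tq d i j k l = Tq d i' j' k' l'.
Proof. by move=> /boolp.funext E; rewrite /Tq /tau E. Qed.

Lemma Tq_swap12 i j k l : Tq d i j k l = Tq d j i k l.
Proof. by apply: Tq_midx => m; rewrite /midx; lia. Qed.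

Lemma Tq_swap23 i j k l : Tq d i j k l = Tq d i k j l.
Proof. by apply: Tq_midx => m; rewrite /midx; lia. Qed.

Lemma Tq_swap34 i j k l : Tq d i j k l = Tq d i j l k.
Proof. by apply: Tq_midx => m; rewrite /midx; lia. Qed.

Lemma Tq_uniq i j k l : uniq [:: i; j; k; l] -> Tq d i j k l = d [set i; j; k; l] / 24.
Proof.
move=> ijkl_uniq.
have midx_mem m : midx i j k l m = (m \in [:: i; j; k; l]).
  by rewrite /midx -count_uniq_mem //= addn0 !addnA.
rewrite /Tq /coef_at /tau (_ : [forall m, _] = true); last first.
  by apply/forallP => m; rewrite midx_mem; case: (_ \in _).
rewrite (_ : [set m | _] = [set i; j; k; l]); last first.
  by apply/setP => m; rewrite !inE midx_mem !inE -!orbA; case: [|| _, _, _ | _].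
by rewrite big1 ?divn1 // => m _; rewrite midx_mem; case: (_ \in _).
Qed.

End SymmetricTensor.

Section FourfoldSums.
Variable I : finType.
Implicit Types f g : I -> I -> I -> I -> R.

Lemma eq_sum4 f g : (forall i j k l, f i j k l = g i j k l) ->
  \sum_i \sum_j \sum_k \sum_l f i j k l = \sum_i \sum_j \sum_k \sum_l g i j k l.
Proof. by move=> fg; do 4!(apply: eq_bigr => ? _). Qed.

Lemma sum4D f g : \sum_i \sum_j \sum_k \sum_l (f i j k l + g i j k l) =
  \sum_i \sum_j \sum_k \sum_l f i j k l + \sum_i \sum_j \sum_k \sum_l g i j k l.
Proof. by rewrite -big_split; do 3!(apply: eq_bigr => ? _; rewrite -big_split). Qed.

Lemma sum4_swap12 f :
  \sum_i \sum_j \sum_k \sum_l f i j k l = \sum_i \sum_j \sum_k \sum_l f j i k l.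
Proof. exact: exchange_big. Qed.

Lemma sum4_swap23 f :
  \sum_i \sum_j \sum_k \sum_l f i j k l = \sum_i \sum_j \sum_k \sum_l f i k j l.
Proof. by apply: eq_bigr => i _; apply: exchange_big. Qed.

Lemma sum4_swap34 f :
  \sum_i \sum_j \sum_k \sum_l f i j k l = \sum_i \sum_j \sum_k \sum_l f i j l k.
Proof. by do 2!(apply: eq_bigr => ? _); apply: exchange_big. Qed.

End FourfoldSums.

Lemma sum_delta_r (I : finType) (a : I) (F : I -> R) : \sum_i F i * (i == a)%:R = F a.
Proof. by rewrite (bigD1 a) //= eqxx mulr1 big1 ?addr0 // => i /negbTE ->; rewrite mulr0. Qed.

Lemma sum_delta_l (I : finType) (a : I) (F : I -> R) : \sum_i (a == i)%:R * F i = F a.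
Proof. by rewrite -[RHS](sum_delta_r a); apply: eq_bigr => i _; rewrite mulrC eq_sym. Qed.

Lemma sum3_delta (I : finType) (a b c : I) (G : I -> I -> I -> R) :
  \sum_x \sum_y \sum_z (a == x)%:R * ((b == y)%:R * ((c == z)%:R * G x y z)) = G a b c.
Proof.
under eq_bigr => x _ do under eq_bigr => y _ do rewrite -!mulr_sumr sum_delta_l.
by under eq_bigr => x _ do rewrite -mulr_sumr sum_delta_l; rewrite sum_delta_l.
Qed.

Lemma delta_mulmx_coord (m : nat) (p r q : 'I_m) (x : 'cV[R]_m) :
  (delta_mx p r *m x) q 0 = (q == p)%:R * x r 0.
Proof.
rewrite mxE -[RHS](sum_delta_l r (fun k => (q == p)%:R * x k 0)); apply: eq_bigr => k _.
by rewrite mxE (eq_sym r); case: (q == p); case: (k == r); rewrite ?mul1r ?mul0r.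
Qed.

Lemma entry_mulmx_delta (m : nat) (M : 'M[R]_m) p q : M p q = (M *m (delta_mx q 0 : 'cV_m)) p 0.
Proof. by rewrite -colE mxE. Qed.

Section Varopoulos.
Variables (n : nat) (t : 'I_n -> 'I_n -> 'I_n -> R).
Hypothesis t_sym12 : forall x y z, t x y z = t y x z.
Hypothesis t_sym23 : forall x y z, t x y z = t x z y.
Hypothesis t_slice_le1 : forall a c, \sum_b `|t a b c| <= 1.
Local Notation D := (2 * n + 2)%N.
Implicit Types x : 'cV[R]_D.

Lemma t_sym13 a b c : t a b c = t c b a.
Proof. by rewrite t_sym12 t_sym23 t_sym12. Qed.

Definition varN (i : 'I_n) : 'M[R]_D :=
  delta_mx (pV i) pE + \sum_b \sum_c t i b c *: delta_mx (pW c) (pV b) + delta_mx pF (pW i).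

Lemma varN_coord i x q : (varN i *m x) q 0 =
  (q == pV i)%:R * x pE 0 + \sum_b \sum_c t i b c * (q == pW c)%:R * x (pV b) 0
  + (q == pF)%:R * x (pW i) 0.
Proof.
rewrite /varN !mulmxDl ![(_ + _ : 'cV_D) q 0]mxE !delta_mulmx_coord mulmx_suml summxE.
congr (_ + _ + _).
apply: eq_bigr => b _; rewrite mulmx_suml summxE; apply: eq_bigr => c _.
by rewrite -scalemxAl mxE delta_mulmx_coord mulrA.
Qed.

Lemma varN_E i x : (varN i *m x) pE 0 = 0.
Proof.
rewrite varN_coord pEV pEF !mul0r addr0 add0r big1 // => b _.
by rewrite big1 // => c _; rewrite pEW mulr0 mul0r.
Qed.

Lemma varN_V i x b : (varN i *m x) (pV b) 0 = (b == i)%:R * x pE 0.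
Proof.
rewrite varN_coord pVV pVF mul0r addr0 big1 ?addr0 // => b' _.
by rewrite big1 // => c _; rewrite pVW mulr0 mul0r.
Qed.

Lemma varN_W i x c : (varN i *m x) (pW c) 0 = \sum_b t i b c * x (pV b) 0.
Proof.
rewrite varN_coord pWV pWF !mul0r addr0 add0r; apply: eq_bigr => b _.
rewrite (eq_bigr (fun c' => t i b c' * x (pV b) 0 * (c' == c)%:R)) ?sum_delta_r // => c' _.
by rewrite pWW eq_sym; ring.
Qed.

Lemma varN_F i x : (varN i *m x) pF 0 = x (pW i) 0.
Proof.
rewrite varN_coord pFV eqxx mul0r mul1r add0r big1 ?add0r // => b _.
by rewrite big1 // => c _; rewrite pFW mulr0 mul0r.
Qed.

Lemma varN2_coord i j x q : (varN i *m (varN j *m x)) q 0 =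
  \sum_c t i j c * (q == pW c)%:R * x pE 0 + (q == pF)%:R * \sum_b t i j b * x (pV b) 0.
Proof.
rewrite varN_coord varN_E varN_W mulr0 add0r exchange_big; congr (_ + _).
  apply: eq_bigr => c _; under eq_bigr do rewrite varN_V.
  rewrite (eq_bigr (fun b => t i b c * (q == pW c)%:R * x pE 0 * (b == j)%:R)) ?sum_delta_r //.
  by move=> b _; ring.
by congr (_ * _); apply: eq_bigr => b _; rewrite t_sym13 t_sym23.
Qed.

Lemma varN_comm i j : varN i *m varN j = varN j *m varN i.
Proof.
apply/matrixP => p q; rewrite !entry_mulmx_delta -!mulmxA !varN2_coord.
by congr (_ + _); [apply: eq_bigr => c _ | congr (_ * _); apply: eq_bigr => b _]; rewrite t_sym12.
Qed.

Lemma varN3_F a b c x : (varN a *m (varN b *m (varN c *m x))) pF 0 = t a b c * x pE 0.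
Proof.
rewrite varN2_coord eqxx mul1r big1 ?add0r => [|c' _]; last by rewrite pFW mulr0 mul0r.
under eq_bigr do rewrite varN_V.
by rewrite (eq_bigr (fun b' => t a b b' * x pE 0 * (b' == c)%:R)) ?sum_delta_r // => b' _; ring.
Qed.

Lemma varN_contraction i x : norm2 (varN i *m x) <= norm2 x.
Proof.
rewrite /norm2 ler_sqrt ?sumr_ge0 // => [|q _]; last exact: sqr_ge0.
rewrite (sum_blocks (fun q => _ ^+ 2)) [X in _ <= X](sum_blocks (fun q => _ ^+ 2)).
rewrite varN_E varN_F expr0n add0r.
under eq_bigr do rewrite varN_V.
rewrite (eq_bigr (fun b => x pE 0 ^+ 2 * (b == i)%:R)) ?sum_delta_r; last first.
  by move=> b _; case: (b == i); rewrite ?mulr1 ?mulr0 ?mul1r ?mul0r ?expr0n.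
under eq_bigr do rewrite varN_W.
have schur : \sum_c (\sum_b t i b c * x (pV b) 0) ^+ 2 <= \sum_b x (pV b) 0 ^+ 2.
  apply: schur_test => // b; under eq_bigr do rewrite t_sym23; exact: t_slice_le1.
have W_le : x (pW i) 0 ^+ 2 <= \sum_c x (pW c) 0 ^+ 2.
  by rewrite (bigD1 i) //= lerDl sumr_ge0 // => c _; apply: sqr_ge0.
have := sqr_ge0 (x pF 0); lra.
Qed.

Variable i0 : 'I_n.
Hypothesis t_i0 : forall b c, t i0 b c = 0.

Definition varA i : 'M[R]_D := if i == i0 then 1%:M else varN i.

Lemma varA_comm i j : varA i *m varA j = varA j *m varA i.
Proof.
rewrite /varA; case: (i == i0); case: (j == i0); rewrite ?mul1mx ?mulmx1 //.
exact: varN_comm.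
Qed.

Lemma opnorm_varA i : opnorm (varA i) <= 1.
Proof.
apply: opnorm_le1 => x; rewrite /varA; case: (i == i0); first by rewrite mul1mx.
exact: varN_contraction.
Qed.

Lemma varA_corner i j k l : (varA i *m varA j *m varA k *m varA l) pF pE =
  (i == i0)%:R * t j k l + (j == i0)%:R * t i k l + (k == i0)%:R * t i j l
  + (l == i0)%:R * t i j k.
Proof.
rewrite entry_mulmx_delta -!mulmxA; set e : 'cV[R]_D := delta_mx pE 0.
have e_E : e pE 0 = 1 by rewrite mxE !eqxx.
have e_F : e pF 0 = 0 by rewrite mxE eq_sym pEF.
have e_V b : e (pV b) 0 = 0 by rewrite mxE eq_sym pEV.
have e_W c : e (pW c) 0 = 0 by rewrite mxE eq_sym pEW.
have N1 a : (varN a *m e) pF 0 = 0 by rewrite varN_F e_W.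
have N2 a b : (varN a *m (varN b *m e)) pF 0 = 0.
  rewrite varN2_coord eqxx mul1r !big1 ?addr0 // => c _; by rewrite ?e_V ?pFW mulr0 ?mul0r.
have N4 a b c d : (varN a *m (varN b *m (varN c *m (varN d *m e)))) pF 0 = 0.
  by rewrite varN3_F varN_E mulr0.
have t_i0_2 a c : t a i0 c = 0 by rewrite t_sym12 t_i0.
have t_i0_3 a b : t a b i0 = 0 by rewrite t_sym13 t_i0.
(* N has nilpotency order 4, so only the words with exactly one factor A_i0 = 1 survive. *)
rewrite /varA; case: (eqVneq i i0) => [->|ni]; case: (eqVneq j i0) => [->|nj];
  case: (eqVneq k i0) => [->|nk]; case: (eqVneq l i0) => [->|nl];
  rewrite ?mul1mx ?e_F ?N1 ?N2 ?N4 ?varN3_F ?e_E ?t_i0 ?t_i0_2 ?t_i0_3;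
  rewrite ?eqxx ?(negbTE ni) ?(negbTE nj) ?(negbTE nk) ?(negbTE nl);
  by rewrite ?mul0r ?mul1r ?mulr1 ?addr0 ?add0r.
Qed.

Lemma corner_Tq_sum (d : {set 'I_n} -> R) :
  (\sum_i \sum_j \sum_k \sum_l Tq d i j k l *: (varA i *m varA j *m varA k *m varA l)) pF pE
  = 4 * \sum_j \sum_k \sum_l Tq d i0 j k l * t j k l.
Proof.
have -> : (\sum_i \sum_j \sum_k \sum_l Tq d i j k l *: (varA i *m varA j *m varA k *m varA l)) pF pE
    = \sum_i \sum_j \sum_k \sum_l Tq d i j k l * (varA i *m varA j *m varA k *m varA l) pF pE.
  rewrite summxE; do 3!(apply: eq_bigr => ? _; rewrite summxE).
  by apply: eq_bigr => ? _; rewrite mxE.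
set S := \sum_j \sum_k \sum_l Tq d i0 j k l * t j k l.
have S1 : \sum_i \sum_j \sum_k \sum_l Tq d i j k l * ((i == i0)%:R * t j k l) = S.
  rewrite /S -(sum_delta_r i0 (fun i => \sum_j \sum_k \sum_l Tq d i j k l * t j k l)).
  apply: eq_bigr => i _; rewrite !mulr_suml; do 3!(apply: eq_bigr => ? _; rewrite ?mulr_suml).
  by ring.
have S2 : \sum_i \sum_j \sum_k \sum_l Tq d i j k l * ((j == i0)%:R * t i k l) = S.
  by rewrite sum4_swap12 -S1; apply: eq_sum4 => i j k l; rewrite Tq_swap12.
have S3 : \sum_i \sum_j \sum_k \sum_l Tq d i j k l * ((k == i0)%:R * t i j l) = S.
  by rewrite sum4_swap23 -S2; apply: eq_sum4 => i j k l; rewrite Tq_swap23.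
have S4 : \sum_i \sum_j \sum_k \sum_l Tq d i j k l * ((l == i0)%:R * t i j k) = S.
  by rewrite sum4_swap34 -S3; apply: eq_sum4 => i j k l; rewrite Tq_swap34.
under eq_sum4 do rewrite varA_corner !mulrDr.
by rewrite !sum4D S1 S2 S3 S4; ring.
Qed.

End Varopoulos.

(** * The quartic form and its symmetric tensor *)

Lemma pair_inj_swap (A B C : Type) (g : A -> B) (h : A -> C) :
  injective (fun a => (g a, h a)) -> injective (fun a => (h a, g a)).
Proof. by move=> gh_inj a a' [ha ga]; apply: gh_inj; rewrite ga ha. Qed.

Section TripleSystem.
Variables (n : nat) (P : finType) (eps : P -> R).
Hypothesis eps_le1 : forall p, `|eps p| <= 1.
Implicit Types (u v w : P -> 'I_n) (f : 'I_n -> 'I_n -> 'I_n -> R).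

Definition tri u v w x y z : R :=
  \sum_p eps p * ((u p == x)%:R * (v p == y)%:R * (w p == z)%:R).

Definition sym3 f x y z : R :=
  (f x y z + f x z y + f y x z + f y z x + f z x y + f z y x) / 6.

Lemma sym3_swap12 f x y z : sym3 f x y z = sym3 f y x z.
Proof. by rewrite /sym3; congr (_ / _); ring. Qed.

Lemma sym3_swap23 f x y z : sym3 f x y z = sym3 f x z y.
Proof. by rewrite /sym3; congr (_ / _); ring. Qed.

Lemma tri_swap12 u v w x y z : tri u v w x y z = tri v u w y x z.
Proof. by apply: eq_bigr => p _; rewrite (mulrC (u p == x)%:R). Qed.

Lemma tri_swap23 u v w x y z : tri u v w x y z = tri u w v x z y.
Proof. by apply: eq_bigr => p _; rewrite mulrAC. Qed.

Lemma sum_pair_indicator_le1 (g h : P -> 'I_n) a c :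
  injective (fun p => (g p, h p)) -> \sum_p (g p == a)%:R * (h p == c)%:R <= 1 :> R.
Proof.
move=> gh_inj; have [p0 /andP[/eqP g0 /eqP h0]|none] := pickP (fun p => (g p == a) && (h p == c)).
  rewrite (bigD1 p0) //= g0 h0 !eqxx mulr1 big1 ?addr0 // => p /negbTE pp0.
  case: (eqVneq (g p) a) => [gp|]; last by rewrite mul0r.
  case: (eqVneq (h p) c) => [hp|]; last by rewrite mulr0.
  by move: pp0; rewrite (gh_inj p p0) ?eqxx //= gp hp g0 h0.
rewrite big1 // => p _; move: (none p).
by case: (g p == a); case: (h p == c); rewrite ?mulr0 ?mul0r.
Qed.

Lemma tri_slice_le1 u v w a c : injective (fun p => (u p, w p)) ->
  \sum_b `|tri u v w a b c| <= 1.
Proof.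
move=> uw_inj; apply: le_trans (sum_pair_indicator_le1 a c uw_inj).
apply: (@le_trans _ _ (\sum_b \sum_p (u p == a)%:R * (v p == b)%:R * (w p == c)%:R)).
  apply: ler_sum => b _; apply: le_trans (ler_norm_sum _ _ _) _; apply: ler_sum => p _.
  rewrite normrM [X in _ * X]ger0_norm ?mulr_ge0 ?ler0n //.
  by rewrite -[X in _ <= X]mul1r ler_wpM2r ?mulr_ge0 ?ler0n.
rewrite exchange_big (eq_bigr (fun p => (u p == a)%:R * (w p == c)%:R)) // => p _.
rewrite -[RHS](sum_delta_l (v p) (fun b => (u p == a)%:R * (w p == c)%:R)).
by apply: eq_bigr => b _; ring.
Qed.

Lemma sum_tri u v w (F : 'I_n -> 'I_n -> 'I_n -> R) :
  \sum_x \sum_y \sum_z F x y z * tri u v w x y z = \sum_p eps p * F (u p) (v p) (w p).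
Proof.
transitivity (\sum_p \sum_x \sum_y \sum_z
    (u p == x)%:R * ((v p == y)%:R * ((w p == z)%:R * (eps p * F x y z)))).
  rewrite [RHS]exchange_big; apply: eq_bigr => x _; rewrite [RHS]exchange_big.
  apply: eq_bigr => y _; rewrite [RHS]exchange_big; apply: eq_bigr => z _.
  by rewrite /tri mulr_sumr; apply: eq_bigr => p _; ring.
by apply: eq_bigr => p _; rewrite sum3_delta.
Qed.

Lemma sym3_tri u v w x y z : sym3 (tri u v w) x y z =
  (tri u v w x y z + tri u w v x y z + tri v u w x y z + tri w u v x y z
   + tri v w u x y z + tri w v u x y z) / 6.
Proof.
rewrite /sym3 (tri_swap23 u v w x z y) (tri_swap12 u v w y x z).
rewrite (tri_swap23 u v w y z x) (tri_swap12 u w v y x z) (tri_swap12 u v w z x y).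
rewrite (tri_swap23 v u w x z y) (tri_swap23 u v w z y x) (tri_swap12 u w v z x y).
by rewrite (tri_swap23 w u v x z y).
Qed.

Lemma tri_out u v w x y z : (forall p, u p != x) -> tri u v w x y z = 0.
Proof. by move=> ux; rewrite /tri big1 // => p _; rewrite (negbTE (ux p)) !mul0r mulr0. Qed.

Section Symmetrized.
Variables u v w : P -> 'I_n.
Hypotheses (uv_inj : injective (fun p => (u p, v p))) (uw_inj : injective (fun p => (u p, w p))).
Hypothesis vw_inj : injective (fun p => (v p, w p)).

Lemma sym3_tri_slice_le1 a c : \sum_b `|sym3 (tri u v w) a b c| <= 1.
Proof.
apply: (@le_trans _ _ (\sum_b (`|tri u v w a b c| + `|tri u w v a b c| + `|tri v u w a b c|
  + `|tri w u v a b c| + `|tri v w u a b c| + `|tri w v u a b c|) / 6)).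
  apply: ler_sum => b _; rewrite sym3_tri normrM (@ger0_norm _ 6^-1) ?invr_ge0 //.
  by rewrite ler_wpM2r ?invr_ge0 //; do 5!(apply: le_trans (ler_normD _ _) _; rewrite lerD2r).
rewrite -mulr_suml ler_pdivrMr // mul1r !big_split /=.
have := tri_slice_le1 v a c uw_inj; have := tri_slice_le1 w a c uv_inj.
have := tri_slice_le1 u a c vw_inj; have := tri_slice_le1 u a c (pair_inj_swap vw_inj).
have := tri_slice_le1 w a c (pair_inj_swap uv_inj).
have := tri_slice_le1 v a c (pair_inj_swap uw_inj).
lra.
Qed.

Lemma sum_sym3_tri (F : 'I_n -> 'I_n -> 'I_n -> R) :
  (forall x y z, F x y z = F y x z) -> (forall x y z, F x y z = F x z y) ->
  \sum_x \sum_y \sum_z F x y z * sym3 (tri u v w) x y z = \sum_p eps p * F (u p) (v p) (w p).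
Proof.
move=> F12 F23; under eq_bigr do under eq_bigr do under eq_bigr do rewrite sym3_tri mulrA !mulrDr.
under eq_bigr do under eq_bigr do rewrite -mulr_suml !big_split /=.
under eq_bigr do rewrite -mulr_suml !big_split /=.
rewrite -mulr_suml !big_split /= !sum_tri.
set G := \sum_p eps p * F (u p) (v p) (w p).
have -> : \sum_p eps p * F (u p) (w p) (v p) = G by apply: eq_bigr => p _; rewrite F23.
have -> : \sum_p eps p * F (v p) (u p) (w p) = G by apply: eq_bigr => p _; rewrite F12.
have -> : \sum_p eps p * F (w p) (u p) (v p) = G by apply: eq_bigr => p _; rewrite F12 F23.
have -> : \sum_p eps p * F (v p) (w p) (u p) = G by apply: eq_bigr => p _; rewrite F23 F12.
have -> : \sum_p eps p * F (w p) (v p) (u p) = G by apply: eq_bigr => p _; rewrite F12 F23 F12.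
by rewrite /G; field.
Qed.

End Symmetrized.

End TripleSystem.

Lemma quartic_eval_sum (n : nat) (P : finType) (S : P -> {set 'I_n}) (a : P -> R)
    (x : 'I_n -> R) : (forall p, #|S p| = 4%N) ->
  quartic_eval (fun T => \sum_p (T == S p)%:R * a p) x = \sum_p a p * \prod_(i in S p) x i.
Proof.
move=> card_S; rewrite /quartic_eval; under eq_bigr do rewrite mulr_suml.
rewrite exchange_big; apply: eq_bigr => p _.
rewrite (bigD1 (S p)) ?card_S //= eqxx mul1r [X in _ + X]big1 ?addr0 // => T /andP[_ /negbTE ->].
by rewrite !mul0r.
Qed.

Section Construction.
Variables (s n : nat).
Hypothesis n_large : (4 * (s * s) + 1 <= n)%N.
Variable e : 'I_(s * s) -> 'I_(s * s) -> bool.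
Local Notation m := (s * s)%N.
Local Notation P := ('I_m * 'I_m)%type.

Fact var0_subproof : (0 < n)%N. Proof. lia. Qed.
Fact varX_subproof (t : 'I_(m + m)) : (1 + t < n)%N. Proof. by have := ltn_ord t; lia. Qed.
Fact varY_subproof (j : 'I_m) : (1 + (m + m) + j < n)%N. Proof. by have := ltn_ord j; lia. Qed.
Fact varZ_subproof (k : 'I_m) : (1 + (m + m) + m + k < n)%N. Proof. by have := ltn_ord k; lia. Qed.

Definition var0 : 'I_n := Ordinal var0_subproof.
Definition varX t : 'I_n := Ordinal (varX_subproof t).
Definition varY j : 'I_n := Ordinal (varY_subproof j).
Definition varZ k : 'I_n := Ordinal (varZ_subproof k).

Definition uX (p : P) := varX (ord_add p.1 p.2).
Definition vY (p : P) := varY p.1.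
Definition wZ (p : P) := varZ p.2.
Definition sign_e (p : P) := bsign (e p.1 p.2).

Ltac slots_inj := move=> [j k] [j' k'] /eqP; rewrite xpair_eqE;
  move=> /andP[/eqP/(congr1 val) /= ? /eqP/(congr1 val) /= ?];
  by congr pair; apply/val_inj => /=; lia.

Lemma uv_inj : injective (fun p => (uX p, vY p)).
Proof.
slots_inj.
Qed.

Lemma uw_inj : injective (fun p => (uX p, wZ p)).
Proof.
slots_inj.
Qed.

Lemma vw_inj : injective (fun p => (vY p, wZ p)).
Proof.
slots_inj.
Qed.

Definition tensor : 'I_n -> 'I_n -> 'I_n -> R := sym3 (tri sign_e uX vY wZ).

Lemma tensor_swap12 x y z : tensor x y z = tensor y x z. Proof. exact: sym3_swap12. Qed.
Lemma tensor_swap23 x y z : tensor x y z = tensor x z y. Proof. exact: sym3_swap23. Qed.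

Lemma tensor_slice_le1 a c : \sum_b `|tensor a b c| <= 1.
Proof.
have sign_le1 p : `|sign_e p| <= 1 by rewrite normr_bsign.
by have := sym3_tri_slice_le1 sign_le1 uv_inj uw_inj vw_inj a c.
Qed.

Lemma tensor_var0 b c : tensor var0 b c = 0.
Proof.
have [u0 v0 w0] : [/\ forall p, uX p != var0, forall p, vY p != var0 & forall p, wZ p != var0].
  by split=> p; apply/eqP => /(congr1 val).
by rewrite /tensor sym3_tri !tri_out // !addr0 mul0r.
Qed.

Definition bound : R := (s * (5 * m + 2))%:R.

Definition supp (p : P) : {set 'I_n} := [set var0; uX p; vY p; wZ p].

Definition coef (S : {set 'I_n}) : R := \sum_p (S == supp p)%:R * (sign_e p / bound).

Lemma supp_uniq p : uniq [:: var0; uX p; vY p; wZ p].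
Proof.
case: p => j k; have := ltn_ord j; have := ltn_ord k.
rewrite /= !inE -!(inj_eq val_inj) /=; lia.
Qed.

Lemma supp_inj : injective supp.
Proof.
move=> [j k] [j' k'] eq_supp; have := ltn_ord j; have := ltn_ord k.
have := ltn_ord j'; have := ltn_ord k'.
have : vY (j, k) \in supp (j', k') by rewrite -eq_supp !inE eqxx !orbT.
have : wZ (j, k) \in supp (j', k') by rewrite -eq_supp !inE eqxx !orbT.
rewrite !inE -!(inj_eq val_inj) /= => *; congr pair; apply/val_inj => /=; lia.
Qed.

Lemma card_supp p : #|supp p| = 4%N.
Proof.
rewrite (_ : supp p = [set i in [:: var0; uX p; vY p; wZ p]]); last first.
  by apply/setP => i; rewrite !inE -!orbA.
by rewrite cardsE; apply/card_uniqP/supp_uniq.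
Qed.

Lemma coef_supp p : coef (supp p) = sign_e p / bound.
Proof.
rewrite /coef (bigD1 p) //= eqxx mul1r big1 ?addr0 // => q /negbTE qp.
by rewrite (inj_eq supp_inj) eq_sym qp mul0r.
Qed.

Lemma quartic_coef x :
  quartic_eval coef x = x var0 / bound * cube_sum e (x \o varX) (x \o varY) (x \o varZ).
Proof.
rewrite quartic_eval_sum; last exact: card_supp.
rewrite /cube_sum mulr_sumr; under [in RHS]eq_bigr do rewrite mulr_sumr.
rewrite pair_bigA; apply: eq_bigr => -[j k] _.
rewrite (eq_bigl [in [:: var0; uX (j, k); vY (j, k); wZ (j, k)]]); last first.
  by move=> i; rewrite !inE -!orbA.
by rewrite -(big_uniq _ (supp_uniq _)) !big_cons big_nil /sign_e /=; ring.
Qed.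

Lemma quartic_coef_le1 : (0 < s)%N ->
  (forall x y z, sign_vector x -> sign_vector y -> sign_vector z -> `|cube_sum e x y z| <= bound) ->
  forall x, sign_vector x -> `|quartic_eval coef x| <= 1.
Proof.
move=> s_gt0 e_bounded x x_pm; have bound_gt0 : 0 < bound by rewrite ltr0n muln_gt0 s_gt0 addn2.
rewrite quartic_coef !normrM normfV (gtr0_norm bound_gt0).
have -> : `|x var0| = 1 by case: (x_pm var0) => ->; rewrite ?normrN normr1.
by rewrite mul1r mulrC ler_pdivrMr // mul1r; apply: e_bounded => i; apply: x_pm.
Qed.

Lemma Tq_tensor_sum :
  \sum_j \sum_k \sum_l Tq coef var0 j k l * tensor j k l = (m * m)%:R / (24 * bound).
Proof.
rewrite /tensor sum_sym3_tri => [||x y z]; last 2 first.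
- exact: Tq_swap23.
- exact: Tq_swap34.
have Tq_supp p : Tq coef var0 (uX p) (vY p) (wZ p) = sign_e p / bound / 24.
  by rewrite Tq_uniq ?supp_uniq // -/(supp p) coef_supp.
rewrite (eq_bigr (fun _ => (24 * bound)^-1)) => [|p _]; last first.
  by rewrite Tq_supp /sign_e !mulrA bsignM eqxx /bsign mul1r invfM mulrC.
by rewrite sumr_const card_prod !card_ord; apply/esym/mulr_natl.
Qed.

End Construction.

Lemma exists_scale n : (9 <= n)%N ->
  exists2 s, (0 < s)%N & (4 * (s * s) + 1 <= n <= 36 * (s * s))%N.
Proof.
move=> n_ge9; have [lo hi] := PeanoNat.Nat.sqrt_spec n (le_0_n n).
set r := PeanoNat.Nat.sqrt n in lo hi.
have r_ge3 : (3 <= r)%N by nia.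
exists (r %/ 3)%N; first by rewrite divn_gt0.
have := divn_eq r 3; have := ltn_pmod r (isT : (0 < 3)%N).
move: (r %/ 3)%N (r %% 3)%N => q rem rem_lt3 r_eq; clearbody r; subst r.
have q_ge1 : (1 <= q)%N by lia.
apply/andP; split; nia.
Qed.

Lemma sqrt_scale_le s n : (0 < s)%N -> (n <= 36 * (s * s))%N ->
  1 / 300 * Num.sqrt n%:R <= 4 * ((s * s * (s * s))%:R / (24 * bound s)).
Proof.
move=> s_gt0 n_small; rewrite /bound !natrM !natrD !natrM; set S : R := s%:R.
have S_ge1 : 1 <= S by rewrite ler1n.
have n_le : n%:R <= 36 * (S * S) by rewrite /S -!natrM ler_nat.
have sqrt_le : Num.sqrt n%:R <= 6 * S.
  rewrite -(ger0_norm (_ : 0 <= 6 * S)) -?sqrtr_sqr ?ler_sqrt ?sqr_ge0 //; [nra | lra].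
have denom_gt0 : 0 < 24 * (S * (5 * (S * S) + 2)) by nra.
have SS_ge1 : 1 <= S * S by nra.
apply: (@le_trans _ _ (S / 50)); first by have := sqrtr_ge0 (n%:R : R); lra.
by rewrite mulrA ler_pdivlMr //; nra.
Qed.

Theorem corollary4p5 :
  exists c : R, 0 < c /\ c <= 1 /\
  exists N : nat, forall n : nat, (N <= n)%N ->
    exists d : {set 'I_n} -> R,
      (forall x : 'I_n -> R, (forall i, x i = 1 \/ x i = -1) ->
         `|quartic_eval d x| <= 1) /\
      exists A : 'I_n -> 'M[R]_(2 * n + 2),
        (forall i j, A i *m A j = A j *m A i) /\
        (forall i, opnorm (A i) <= 1) /\
        c * Num.sqrt (n%:R) <=
          opnorm (\sum_(i < n) \sum_(j < n) \sum_(k < n) \sum_(l < n)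
                    Tq d i j k l *: (A i *m A j *m A k *m A l)).
Proof.
exists (1 / 300); split; first by rewrite divr_gt0.
split; first by rewrite ler_pdivrMr // mul1r ler1n.
exists 9%N => n /exists_scale[s s_gt0 /andP[n_large n_small]].
have [e e_bounded] := exists_sign_pattern s_gt0.
have t12 := tensor_swap12 n_large e; have t23 := tensor_swap23 n_large e.
exists (coef n_large e); split; first exact: quartic_coef_le1.
exists (varA (tensor n_large e) (var0 n_large)); split; first exact: varA_comm.
split; first by move=> i; apply: opnorm_varA => //; apply: tensor_slice_le1.
apply: le_trans (opnorm_entry_le _ pF pE).
rewrite corner_Tq_sum //; last exact: tensor_var0.
by rewrite Tq_tensor_sum; apply: le_trans (ler_norm _); apply: sqrt_scale_le.
Qed.
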